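(* Let $1\le q\le k$, $n\ge 2$, $f\in P_1^{k,q}$, $a\in E_k$ with $\gcd(a,k)=1$, $b_1,\dots,b_n\in E_k$, $g_i(x_i)=[a\,f(x_i)+b_i]\bmod k$ for $i=1,\dots,n$, and $h(x_1,\dots,x_n)=[g_1(x_1)+\dots+g_n(x_n)]\bmod k$. Let $1<t\le n$ with $\gcd(t,k)=1$. Then identifying any $t$ distinct variables of $h$ (substituting one common variable $z$ — new or one of them — for all of them) yields, as a function of $z$ and the remaining $n-t$ variables, an $H(q)$-function belonging to $P_{n-t+1}^k$.
   Context: $E_k=\{0,1,\dots,k-1\}$, $k\ge 2$, with arithmetic modulo $k$. $P_m^k$ is the set of all functions $E_k^m\to E_k$; $P_1^{k,q}$ is the set of functions $E_k\to E_k$ taking exactly $q$ distinct values. For a variable $x$ of a function $g$, $\mathrm{Spr}(x,g)$ is the set of numbers of distinct values of all one-variable functions obtained from $g$ by fixing all variables other than $x$ to constants (for a function of the single variable $x$, this is $\{$number of its distinct values$\}$). A function $g$ is an $H(q)$-function if $\mathrm{Spr}(x,g)=\{q\}$ for every variable $x$ of $g$. *)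

(* E_k is modelled as 'Z_k (with hypothesis 1 < k, so 'Z_k = 'I_k
   with arithmetic modulo k). A function in P_m^k is a map {ffun 'I_m -> 'Z_k} -> 'Z_k. *)
From HB Require Import structures.
From mathcomp Require Import all_boot all_order all_algebra.
Set Implicit Arguments. Unset Strict Implicit. Unset Printing Implicit Defensive.
Import GRing.Theory.

Definition upd (m : nat) (T : Type) (x : {ffun 'I_m -> T}) (i : 'I_m) (c : T)
  : {ffun 'I_m -> T} := [ffun j => if j == i then c else x j].

Definition Spr (m k : nat) (g : {ffun 'I_m -> 'Z_k} -> 'Z_k) (i : 'I_m) : pred nat :=
  fun s => [exists x : {ffun 'I_m -> 'Z_k}, #|[set g (upd x i c) | c : 'Z_k]| == s].

Definition H_fun (q m k : nat) (g : {ffun 'I_m -> 'Z_k} -> 'Z_k) : Prop :=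
  forall (i : 'I_m) (s : nat), Spr g i s = (s == q).

From HB Require Import structures.
From mathcomp Require Import all_boot all_order all_algebra.
Import GRing.Theory.
Local Open Scope ring_scope.

(* Identifying the t variables of S in h = sum_i (a f(x_i) + b_i) gives
     H(y) = sum_i (a f(y_(sigma i)) + b_i).
   Fix all coordinates of y but the j-th one, which runs over c.  The terms
   with sigma i = j all become a f(c) + b_i, so the restriction of H to that
   line is the affine image  c |-> (a *+ m_j) f(c) + C  of f, where m_j is the
   size of the fibre of sigma over j.  Every fibre of sigma is either S (size
   t) or a singleton, hence m_j is coprime to k; as a is coprime to k too,
   a *+ m_j is a unit of Z_k and the affine map is injective.  So every line
   restriction takes exactly #|image f| = q values, and H is an H(q)-function. *)

Lemma card_affine_image {R : finUnitRingType} {T : finType} (f : T -> R) (u C : R) :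
  u \is a GRing.unit ->
  #|[set u * f c + C | c : T]| = #|[set f c | c : T]|.
Proof.
move=> u_unit; rewrite (imset_comp (fun v => u * v + C) f).
by apply: card_imset => v w /addIr; apply: mulrI.
Qed.

Lemma Zp_natmul_unit {k : nat} {a : 'Z_k} {m : nat} :
  (1 < k)%N -> coprime a k -> coprime m k -> a *+ m \is a GRing.unit.
Proof.
move=> k_gt1 a_cop m_cop.
have -> : a *+ m = ((a : nat) * m)%:R :> 'Z_k by rewrite natrM mulr_natr natr_Zp.
by rewrite unitZpE // coprime_sym coprimeMl a_cop m_cop.
Qed.

Section Identification.

Context {n t : nat} {S : {set 'I_n}} {sigma : 'I_n -> 'I_(n - t).+1}.
Hypothesis t_gt0 : (0 < t)%N.
Hypothesis card_S : #|S| = t.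
Hypothesis sigma_eq :
  forall i j : 'I_n, (sigma i == sigma j) = (i == j) || ((i \in S) && (j \in S)).

Definition fibre (j : 'I_(n - t).+1) : {set 'I_n} := [set i | sigma i == j].

Lemma fibre_in_S (i0 : 'I_n) : i0 \in S -> fibre (sigma i0) = S.
Proof.
move=> i0S; apply/setP => i; rewrite inE sigma_eq i0S andbT.
by case: eqP => // ->.
Qed.

Lemma fibre_notin_S (i0 : 'I_n) : i0 \notin S -> fibre (sigma i0) = [set i0].
Proof. by move=> i0S; apply/setP => i; rewrite !inE sigma_eq (negbTE i0S) andbF orbF. Qed.

(* The n - t elements outside S go injectively to points distinct from the
   common image of S; counting, sigma is onto. *)
Lemma sigma_onto (j : 'I_(n - t).+1) : exists i, sigma i = j.
Proof.
have [s0 s0S] : exists s0, s0 \in S by apply/set0Pn; rewrite -card_gt0 card_S.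
pose A := sigma @: ~: S.
have card_A : #|A| = (n - t)%N.
  rewrite /A card_in_imset; first by rewrite cardsCs setCK card_ord card_S.
  move=> i i'; rewrite !inE => /negbTE iS _ /eqP.
  by rewrite sigma_eq iS /= orbF => /eqP.
have s0_notin_A : sigma s0 \notin A.
  apply/imsetP => -[i]; rewrite inE => iS /eqP.
  by rewrite eq_sym sigma_eq s0S (negbTE iS) orbF => /eqP eq_i; rewrite eq_i s0S in iS.
have full : sigma s0 |: A = [set: 'I_(n - t).+1].
  by apply/eqP; rewrite eqEcard subsetT cardsU1 s0_notin_A card_A cardsT card_ord /= add1n.
have : j \in sigma s0 |: A by rewrite full inE.
by case/setU1P => [->|/imsetP[i _ ->]]; [exists s0 | exists i].
Qed.

(* Every fibre has size t or 1, hence size coprime to k when t is. *)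
Lemma coprime_card_fibre {k : nat} (j : 'I_(n - t).+1) :
  coprime t k -> coprime #|fibre j| k.
Proof.
move=> t_cop; have [i0 <-] := sigma_onto j.
have [i0S|i0S] := boolP (i0 \in S).
  by rewrite fibre_in_S // card_S.
by rewrite fibre_notin_S // cards1 coprime1n.
Qed.

End Identification.

Lemma identified_sum_on_line {R : pzRingType} {T : Type} {n p : nat}
    (sigma : 'I_n -> 'I_p) (f : T -> R) (a : R) (b : 'I_n -> R)
    (y : {ffun 'I_p -> T}) (j : 'I_p) :
  let C := \sum_(i < n | sigma i == j) b i
         + \sum_(i < n | sigma i != j) (a * f (y (sigma i)) + b i) in
  forall c : T,
  \sum_(i < n) (a * f (upd y j c (sigma i)) + b i)
    = a *+ #|[set i | sigma i == j]| * f c + C.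
Proof.
move=> C c; rewrite (bigID (fun i => sigma i == j)) /= /C addrA.
congr (_ + _); last by apply: eq_bigr => i /negbTE ne_ij; rewrite ffunE ne_ij.
rewrite (eq_bigr (fun i => a * f c + b i)) => [|i eq_ij]; last by rewrite ffunE eq_ij.
by rewrite big_split /= sumr_const mulrnAl cardsE.
Qed.

Lemma H_fun_of_line_card (q m k : nat) (g : {ffun 'I_m -> 'Z_k} -> 'Z_k) :
  (forall x i, #|[set g (upd x i c) | c : 'Z_k]| = q) -> H_fun q g.
Proof.
move=> line_card i s; apply/existsP/eqP => [[x /eqP <-]|->]; first exact: line_card.
by exists [ffun=> 0]; rewrite line_card.
Qed.

Theorem corollary2p9 (k q n : nat) (f : 'Z_k -> 'Z_k) (a : 'Z_k) (b : 'I_n -> 'Z_k)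
    (t : nat) (S : {set 'I_n}) (sigma : 'I_n -> 'I_(n - t).+1) :
  (1 < k)%N -> (1 <= q <= k)%N -> (2 <= n)%N ->
  #|[set f x | x : 'Z_k]| = q ->
  coprime a k ->
  (1 < t <= n)%N -> coprime t k ->
  #|S| = t ->
  (forall i j : 'I_n, (sigma i == sigma j) = (i == j) || ((i \in S) && (j \in S))) ->
  let g := fun (i : 'I_n) (x : 'Z_k) => a * f x + b i in
  let h := fun x : {ffun 'I_n -> 'Z_k} => \sum_(i < n) g i (x i) in
  H_fun q (fun y : {ffun 'I_(n - t).+1 -> 'Z_k} => h [ffun i => y (sigma i)]).
Proof.
move=> k_gt1 _ _ card_im_f a_cop /andP[t_gt1 _] t_cop card_S sigma_eq g h.
apply: H_fun_of_line_card => y j.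
have fibre_cop := coprime_card_fibre (ltnW t_gt1) card_S sigma_eq j t_cop.
have -> : [set h [ffun i => upd y j c (sigma i)] | c : 'Z_k]
        = [set \sum_(i < n) (a * f (upd y j c (sigma i)) + b i) | c : 'Z_k].
  by apply: eq_imset => c; apply: eq_bigr => i _; rewrite ffunE.
rewrite (eq_imset _ (identified_sum_on_line sigma f a b y j)) card_affine_image //.
exact: Zp_natmul_unit k_gt1 a_cop fibre_cop.
Qed.
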